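(* Let $P=\{p_1<\dots<p_n\}\subset\mathbb{R}$ and let $S'$ be a finite set of intervals of $\mathbb{R}$, all of the same length and with no endpoint in $P$. If every point of $P$ lies in some interval of $S'$ and for every $1\le i<n$ the points $p_i,p_{i+1}$ have different codes $\{s\in S':p\in s\}$, then all points of $P$ have pairwise different codes with respect to $S'$ (so $S'$ is a discriminating code of $P$).
   Context: The code of a point $p$ with respect to a set $S'$ of intervals is $\{s\in S': p\in s\}$. A discriminating code of $P$ is a set of objects such that every point of $P$ has a nonempty code and distinct points have distinct codes. *)

From HB Require Import structures.
From mathcomp Require Import all_boot all_order all_algebra.
From mathcomp Require Import reals.
Set Implicit Arguments. Unset Strict Implicit. Unset Printing Implicit Defensive.
Import Order.TTheory GRing.Theory Num.Theory.
Local Open Scope ring_scope.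

(* A finite family S' of intervals of common length L is given by an index
   finType I and left endpoints a : I -> R; interval i is the closed interval
   [a i, a i + L].  (Open/closed is irrelevant: no endpoint lies in P.) *)
Definition interval_of (R : realType) (L : R) (a : R) : interval R :=
  `[a, a + L]%R.

Definition code (R : realType) (I : finType) (a : I -> R) (L : R) (x : R)
  : {set I} := [set i | x \in interval_of L (a i)].

From HB Require Import structures.
From mathcomp Require Import all_boot all_order all_algebra.
From mathcomp Require Import reals.
Set Implicit Arguments. Unset Strict Implicit. Unset Printing Implicit Defensive.
Import Order.TTheory GRing.Theory Num.Theory.
Local Open Scope ring_scope.

(* Codes with respect to intervals of a common length behave
   "convexly" along the line: if x <= y <= z, then
   - every interval containing both x and z contains y (intervals are convex),
   - every interval containing y contains x or z, as soon as some interval t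
     contains both x and z: an interval containing y but neither x nor z would
     lie strictly inside (x, z), hence be strictly shorter than t.
   So when code x = code z is nonempty, code y = code x for every y in between.
   For the theorem, if p_k and p_l (k < l) had the same nonempty code, then
   p_(k+1), lying in [p_k, p_l], would have that code too, contradicting the
   hypothesis on consecutive points. *)

Section IntervalCodes.

Variables (R : realType) (I : finType) (a : I -> R) (L : R).

Local Notation code := (code a L).

Lemma mem_code (x : R) (i : I) : (i \in code x) = (a i <= x <= a i + L).
Proof. by rewrite inE /interval_of in_itv. Qed.

Lemma code_convex (x y z : R) :
  x <= y -> y <= z -> code x :&: code z \subset code y.
Proof.
move=> xy yz; apply/subsetP => s; rewrite inE !mem_code.
case/andP=> /andP[sx _] /andP[_ zs].
by rewrite (le_trans sx xy) (le_trans yz zs).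
Qed.

(* Since all intervals have the same length, an interval containing a point
   between x and z must contain x or z, provided some interval contains both. *)
Lemma code_sandwich (x y z : R) :
  x <= y -> y <= z -> code x :&: code z != set0 ->
  code y \subset code x :|: code z.
Proof.
move=> xy yz /set0Pn[t]; rewrite inE !mem_code.
case/andP=> /andP[tx _] /andP[_ zt].
apply/subsetP => s; rewrite mem_code inE !mem_code => /andP[sy ys].
rewrite (le_trans xy ys) (le_trans sy yz) /= !andbT.
apply/negPn/negP; rewrite negb_or -!ltNge => /andP[xs sz].
have t_before_s : a t < a s := le_lt_trans tx xs.
have s_before_t : a s + L < a t + L := lt_le_trans sz zt.
by move: s_before_t; rewrite ltrD2r ltNge (ltW t_before_s).
Qed.

Lemma code_between (x y z : R) :
  x <= y -> y <= z -> code x = code z -> code x != set0 -> code y = code x.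
Proof.
move=> xy yz cxz nz; apply/eqP; rewrite eqEsubset.
have := code_sandwich xy yz; have := code_convex xy yz.
by rewrite -cxz setIid setUid => -> ->.
Qed.

End IntervalCodes.

Theorem mainTheorem8 (R : realType) (n : nat) (p : 'I_n -> R)
  (I : finType) (a : I -> R) (L : R) :
  (* P = {p_1 < ... < p_n} *)
  (forall i j : 'I_n, (i < j)%N -> p i < p j) ->
  (* all intervals have the same length L *)
  0 <= L ->
  (* no endpoint of an interval lies in P *)
  (forall (s : I) (k : 'I_n), p k != a s /\ p k != a s + L) ->
  (* every point of P lies in some interval of S' *)
  (forall k : 'I_n, code a L (p k) != set0) ->
  (* consecutive points have different codes *)
  (forall (k : 'I_n) (Hk : (k.+1 < n)%N),
      code a L (p k) != code a L (p (Ordinal Hk))) ->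
  (* then all points have pairwise different codes *)
  forall k l : 'I_n, k != l -> code a L (p k) != code a L (p l).
Proof.
move=> p_incr _ _ covered consec k l.
have p_mono (i j : 'I_n) : (i <= j)%N -> p i <= p j.
  by rewrite leq_eqVlt => /orP[/eqP/val_inj-> // | /p_incr/ltW].
wlog kl : k l / (k < l)%N => [wlog_kl | _].
  case: (ltngtP k l) => [/wlog_kl // | lk _ | /val_inj->]; last by rewrite eqxx.
  by rewrite eq_sym; apply: wlog_kl => //; rewrite -val_eqE ltn_eqF.
have Hk : (k.+1 < n)%N by apply: leq_ltn_trans (ltn_ord l).
have pk_le_next := p_mono k (Ordinal Hk) (leqnSn k).
have next_le_pl := p_mono (Ordinal Hk) l kl.
apply: contra (consec k Hk) => /eqP same_code; apply/eqP.
by rewrite (code_between pk_le_next next_le_pl same_code (covered k)).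
Qed.
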